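(* Let $n\in\mathbb{N}$ and let $A$ be an $n\times n$ acyclic real symmetric matrix with an eigenvalue $\lambda$ of multiplicity one. If $u\in[n]$ is an index with $\phi(A-u,\lambda)\neq 0$, then there exist a unit $\lambda$-eigenvector $\boldsymbol{\beta}$ of $A$ and a $\lambda$-eigenvector $\boldsymbol{\gamma}$ of $A$ such that for every $v\in[n]$ \[ \boldsymbol{\beta}(v)=\begin{cases} \dfrac{W(P_{u,v})\,\phi(A-P_{u,v},\lambda)}{\sqrt{\phi(A-u,\lambda)\,\phi'(A,\lambda)}} & \text{if there is a path from } u \text{ to } v \text{ in } G(A),\\ 0 & \text{otherwise},\end{cases} \qquad\text{and}\qquad |\boldsymbol{\gamma}(v)|=\sqrt{|\phi(A-v,\lambda)|}. \]
   Context: $[n]=\{1,\ldots,n\}$. For a real symmetric $n\times n$ matrix $A$, its graph $G(A)$ has vertex set $[n]$, with $u\neq v$ adjacent iff $A_{uv}\neq 0$; each edge $uv$ has weight $w(uv)=A_{uv}$ and each vertex $v$ has weight $w(v)=A_{vv}$. $A$ is called acyclic if $G(A)$ is a forest. When $u,v$ lie in the same component, $P_{u,v}$ denotes the unique path between them (a single vertex if $u=v$), and $W(P_{u,v})$ is the product of the weights of its edges (equal to $1$ if $u=v$). For an index set $U$, $A-U$ is the matrix obtained from $A$ by deleting the rows and columns indexed by $U$. $\phi(B,x)=\det(x\mathbb{I}-B)$ is the characteristic polynomial (with $\phi$ of the empty matrix equal to $1$), and $\phi'(A,\lambda)$ denotes the derivative of $x\mapsto\phi(A,x)$ evaluated at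 $x=\lambda$. *)

From HB Require Import structures.
From mathcomp Require Import all_boot all_order all_algebra.
From mathcomp Require Import reals.
Set Implicit Arguments. Unset Strict Implicit. Unset Printing Implicit Defensive.
Import Order.TTheory GRing.Theory Num.Theory.
Local Open Scope ring_scope.

Section AcyclicDefs.
Variables (R : realType) (n : nat).
Implicit Types (A : 'M[R]_n).

Definition adjA A : rel 'I_n := fun u v => (u != v) && (A u v != 0).

Definition is_cycleA A (c : seq 'I_n) : bool :=
  [&& (2 < size c)%N, uniq c & cycle (adjA A) c].

Definition acyclic A : Prop := forall c : seq 'I_n, ~~ is_cycleA A c.

Definition is_pathA A (u v : 'I_n) (s : seq 'I_n) : bool :=
  [&& path (adjA A) u s, last u s == v & uniq (u :: s)].

Definition pathW A (u : 'I_n) (s : seq 'I_n) : R :=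
  \prod_(e <- zip (u :: s) s) A e.1 e.2.

Definition delmx A (U : {set 'I_n}) : 'M[R]_#|~: U| :=
  \matrix_(i, j) A (enum_val i) (enum_val j).

End AcyclicDefs.

Definition phi (R : realType) (m : nat) (B : 'M[R]_m) (x : R) : R :=
  (char_poly B).[x].

Definition dphi (R : realType) (m : nat) (B : 'M[R]_m) (x : R) : R :=
  (char_poly B)^`().[x].

Definition eigvec (R : realType) (n : nat) (A : 'M[R]_n) (lam : R) (x : 'cV[R]_n) :=
  x != 0 /\ A *m x = lam *: x.

Definition unit_vec (R : realType) (n : nat) (x : 'cV[R]_n) :=
  \sum_i (x i 0) ^+ 2 = 1.

From HB Require Import structures.
From mathcomp Require Import all_boot all_order all_algebra.
From mathcomp Require Import reals perm.
Import Order.TTheory GRing.Theory Num.Theory.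
Local Open Scope ring_scope.
Set Implicit Arguments. Unset Strict Implicit. Unset Printing Implicit Defensive.

(* Let M = lam I - A and N = adj M.  As det M = 0 we have M N = 0, and since
   N u u = phi (A - u, lam) <> 0 the kernel of M is spanned by the column
   N(., u); with the symmetry of N this gives N v u ^ 2 = phi (A - v, lam)
   phi (A - u, lam), and Jacobi's formula phi'(A, lam) = tr N turns the sum
   over v into phi (A - u, lam) phi'(A, lam).  Suitable multiples of that column
   are thus beta and gamma.  Finally, expanding N v u along column u, with the
   vertices already visited deleted, only the neighbour of u on the unique
   u-v path of the forest contributes, whence N v u = W(P) phi (A - P, lam),
   and N v u = 0 when no such path exists. *)

Section AdjugateExpansion.
Variables (T : comNzRingType) (n : nat).
Implicit Types (X Y : 'M[T]_n) (S : {set 'I_n}).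

Definition row_delta X i j : 'M[T]_n :=
  \matrix_(k, l) if k == i then (j == l)%:R else X k l.

(* The principal submatrix on [S], padded with the identity so that shrinking
   [S] keeps the size [n]. *)
Definition principal_mx S X : 'M[T]_n :=
  \matrix_(i, j) if (i \in S) && (j \in S) then X i j else (i == j)%:R.

Lemma det_row_delta X i j : \det (row_delta X i j) = \adj X j i.
Proof.
rewrite (expand_det_row _ i) (bigD1 j) //= big1 ?addr0; last first.
  by move=> l /negPf jl; rewrite mxE eqxx eq_sym jl mul0r.
rewrite mxE !eqxx mul1r [RHS]mxE /cofactor; congr (_ * \det _).
by apply/matrixP => k l; rewrite !mxE eq_sym (negPf (neq_lift i k)).
Qed.

Lemma eq_det_unit_row X Y i j :
  (forall l, X i l = (j == l)%:R) -> (forall l, Y i l = (j == l)%:R) ->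
  (forall k l, k != i -> l != j -> X k l = Y k l) -> \det X = \det Y.
Proof.
move=> Xi Yi XY; rewrite (expand_det_row X i) (expand_det_row Y i).
apply: eq_bigr => l _; rewrite Xi Yi.
have [<-|_] := eqVneq j l; last by rewrite !mul0r.
congr (_ * (_ * \det _)); apply/matrixP => a b; rewrite !mxE.
by apply: XY; rewrite eq_sym neq_lift.
Qed.

Lemma det_xrow X i k : i != k -> \det (xrow i k X) = - \det X.
Proof. by move=> ik; rewrite xrowE det_mulmx det_perm odd_tperm ik expr1 mulN1r. Qed.

Lemma principal_mxT X : principal_mx setT X = X.
Proof. by apply/matrixP => i j; rewrite mxE !in_setT. Qed.

Lemma principal_mx_comp S S' X :
  principal_mx S' (principal_mx S X) = principal_mx (S :&: S') X.
Proof.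
apply/matrixP => i j; rewrite !mxE !inE.
by case: (i \in S'); case: (j \in S'); case: (i \in S); case: (j \in S);
  rewrite //= ?andbF.
Qed.

Lemma adj_diag X u : \adj X u u = \det (principal_mx [set~ u] X).
Proof.
rewrite -det_row_delta; apply: (@eq_det_unit_row _ _ u u) => [l|l|k l ku lu].
- by rewrite mxE eqxx.
- by rewrite mxE !inE eqxx.
by rewrite !mxE !inE (negPf ku) lu.
Qed.

(* Expand [\det (row_delta X u v)] along column [u]; once rows [u] and [i] are
   swapped, each cofactor has the unit row [e_u] at [i], so its column [u] may
   be cleared. *)
Lemma adj_offdiag_expand X u v : v != u ->
  \adj X v u = - \sum_(i | i != u) X i u * \adj (principal_mx [set~ u] X) v i.
Proof.
move=> vu; rewrite -det_row_delta (expand_det_col _ u) (bigD1 u) //=.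
rewrite mxE eqxx (negPf vu) mul0r add0r -sumrN; apply: eq_bigr => i iu.
rewrite mxE (negPf iu) -mulrN; congr (_ * _).
have ui : u != i by rewrite eq_sym.
have -> : cofactor (row_delta X u v) i u = \adj (row_delta X u v) u i by rewrite mxE.
rewrite -!det_row_delta -(@det_xrow _ u i) //.
apply: (@eq_det_unit_row _ _ i u) => [l|l|k l ki lu].
- by rewrite mxE eqxx.
- by rewrite !mxE tpermR (negPf ui) !inE eqxx.
rewrite !mxE (negPf ki); have [->|ku] := eqVneq k u; first by rewrite tpermL eqxx.
by rewrite tpermD 1?eq_sym // (eq_sym i k) (negPf ki) !inE ku lu.
Qed.

Lemma adj_principal_offdiag S X u v : u \in S -> v != u ->
  \adj (principal_mx S X) v u =
  - \sum_(i in S :\ u) X i u * \adj (principal_mx (S :\ u) X) v i.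
Proof.
move=> uS vu; rewrite adj_offdiag_expand // principal_mx_comp -setDE.
congr (- _); rewrite big_mkcond [RHS]big_mkcond; apply: eq_bigr => i _ /=.
rewrite !inE mxE uS andbT; have [//|iu] := eqVneq i u.
by case: (i \in S); rewrite /= ?mul0r.
Qed.

End AdjugateExpansion.

Section PrincipalMinor.
Variables (T : comNzRingType) (n : nat) (S : {set 'I_n}).

Lemma det_castmx m (e : m = n) (B : 'M[T]_m) : \det (castmx (e, e) B) = \det B.
Proof. by case: n / e; rewrite castmx_id. Qed.

Lemma det_row_col_perm (s : 'S_n) (X : 'M[T]_n) :
  \det (row_perm s (col_perm s X)) = \det X.
Proof.
rewrite row_permE col_permE !det_mulmx !det_perm odd_permV mulrCA mulrA.
by rewrite -mulrA -signr_addb addbb mulr1.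
Qed.

Let card_split : (#|S| + #|~: S|)%N = n.
Proof. by rewrite cardsC card_ord. Qed.

Let split_set (i : 'I_(#|S| + #|~: S|)) : 'I_n :=
  match split i with inl a => enum_val a | inr b => enum_val b end.

Let split_set_inj : injective split_set.
Proof.
rewrite /split_set => i j; case: split_ordP => a ->; case: split_ordP => b -> ab.
- by rewrite (enum_val_inj ab).
- by have := enum_valP a; rewrite ab; have := enum_valP b; rewrite inE => /negPf ->.
- by have := enum_valP b; rewrite -ab; have := enum_valP a; rewrite inE => /negPf ->.
- by rewrite (enum_val_inj ab).
Qed.

Let sigma_inj : injective (split_set \o cast_ord (esym card_split)).
Proof. exact: inj_comp split_set_inj (@cast_ord_inj _ _ _). Qed.

(* Conjugating by the permutation listing [S] first and [~: S] next turns
   [principal_mx S X] into a block-diagonal matrix with blocks the minor and [1]. *)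
Lemma det_principal_mx (X : 'M[T]_n) :
  \det (principal_mx S X) =
  \det (\matrix_(i, j) X (enum_val i) (enum_val j) : 'M_#|S|).
Proof.
rewrite -(det_row_col_perm (perm sigma_inj)) -[RHS]mulr1 -(det1 T #|~: S|).
rewrite -(det_ublock _ (0 : 'M_(#|S|, #|~: S|))) -(det_castmx card_split).
congr (\det _); apply/matrixP => i j; rewrite castmxE.
rewrite ![in LHS]mxE !permE /= /split_set.
move: (cast_ord _ i) (cast_ord _ j) => {}i {}j.
have outS (b : 'I_#|~: S|) : (enum_val b \in S) = false.
  by have := enum_valP b; rewrite inE => /negPf.
case: split_ordP => a ->; case: split_ordP => b ->.
- by rewrite block_mxEul !mxE !enum_valP.
- rewrite block_mxEur mxE outS andbF; case: eqP => // ab.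
  by have := enum_valP a; rewrite ab outS.
- rewrite block_mxEdl mxE outS; case: eqP => // ab.
  by have := enum_valP b; rewrite -ab outS.
- by rewrite block_mxEdr !mxE outS (inj_eq enum_val_inj).
Qed.

End PrincipalMinor.

Section DerivDeterminant.
Variable T : comNzRingType.

Lemma deriv_prod n (F : 'I_n -> {poly T}) :
  (\prod_i F i)^`() = \sum_i \prod_j (if j == i then (F j)^`() else F j).
Proof.
elim: n F => [|n IH] F; first by rewrite !big_ord0 -polyC1 derivC.
rewrite big_ord_recl derivM IH big_ord_recl big_ord_recl eqxx mulr_sumr.
congr (_ + _); apply: eq_bigr => i _; rewrite big_ord_recl /=.
by congr (_ * _); apply: eq_bigr => j _; rewrite (inj_eq lift_inj).
Qed.

Lemma deriv_det n (X : 'M[{poly T}]_n) :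
  (\det X)^`() =
  \sum_i \det (\matrix_(a, b) if a == i then (X a b)^`() else X a b).
Proof.
rewrite /determinant raddf_sum exchange_big /=; apply: eq_bigr => s _.
rewrite -mulr_sumr; have -> : ((-1) ^+ s * \prod_i X i (s i))^`() =
    (-1) ^+ s * (\prod_i X i (s i))^`().
  by case: (odd_perm s); rewrite ?expr1 ?expr0 ?mulN1r ?mul1r ?derivN.
rewrite deriv_prod; congr (_ * _); apply: eq_bigr => i _.
by apply: eq_bigr => j _; rewrite mxE.
Qed.

End DerivDeterminant.

Section CharPoly.
Variable R : realType.

Lemma char_poly_mx_eval m (B : 'M[R]_m) x :
  map_mx (horner_eval x) (char_poly_mx B) = x%:M - B.
Proof.
apply/matrixP => i j.
by rewrite !mxE horner_evalE hornerD hornerN hornerMn hornerX hornerC.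
Qed.

Lemma phi_det m (B : 'M[R]_m) x : phi B x = \det (x%:M - B).
Proof. by rewrite /phi -horner_evalE -det_map_mx char_poly_mx_eval. Qed.

Lemma phi_delmx n (A : 'M[R]_n) U x :
  phi (delmx A U) x = \det (principal_mx (~: U) (x%:M - A)).
Proof.
rewrite phi_det det_principal_mx; congr (\det _); apply/matrixP => i j.
by rewrite !mxE (inj_eq enum_val_inj).
Qed.

Lemma dphi_tr_adj m (B : 'M[R]_m) x : dphi B x = \tr (\adj (x%:M - B)).
Proof.
rewrite /dphi /char_poly deriv_det horner_sum; apply: eq_bigr => i _.
have -> : \matrix_(a, b) (if a == i then (char_poly_mx B a b)^`()
                         else char_poly_mx B a b) = row_delta (char_poly_mx B) i i.
  apply/matrixP => a b; rewrite !mxE; have [->|] //= := eqVneq a i.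
  by rewrite derivB derivMn derivX derivC subr0 eq_sym.
by rewrite det_row_delta -horner_evalE -char_poly_mx_eval -map_mx_adj [RHS]mxE.
Qed.

End CharPoly.

Section SingularKernel.
Variables (F : fieldType) (n : nat).
Implicit Types (X : 'M[F]_n).

Lemma ker_vanishing_eq0 X u (y : 'cV[F]_n) :
  \det (principal_mx [set~ u] X) != 0 -> X *m y = 0 -> y u 0 = 0 -> y = 0.
Proof.
move=> detP Xy yu; have PU : principal_mx [set~ u] X \in unitmx.
  by rewrite unitmxE unitfE.
suff Py : principal_mx [set~ u] X *m y = 0 by rewrite -(mulKmx PU y) Py mulmx0.
apply/matrixP => i k; rewrite ord1 !mxE; have [->|iu] := eqVneq i u.
  rewrite (bigD1 u) //= big1 ?addr0 => [|j ju]; first by rewrite yu mulr0.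
  by rewrite !mxE !inE eqxx /= eq_sym (negPf ju) mul0r.
transitivity ((X *m y) i 0); last by rewrite Xy mxE.
rewrite mxE; apply: eq_bigr => j _; rewrite !mxE !inE iu /=.
by have [->|ju] := eqVneq j u; rewrite ?yu ?mulr0.
Qed.

(* The columns of [\adj X] lie in the kernel of [X], which is spanned by any of
   its vectors not vanishing at [u]. *)
Lemma adj_col_proportional X u w i : \det X = 0 -> \adj X u u != 0 ->
  \adj X i w * \adj X u u = \adj X u w * \adj X i u.
Proof.
move=> detX0 Nuu; set N := \adj X.
have XN : X *m N = 0 by rewrite mul_mx_adj detX0 raddf0.
set y := N u u *: col w N - N u w *: col u N.
have Xy : X *m y = 0.
  by rewrite mulmxBr -!scalemxAr !colE !mulmxA XN !mul0mx !scaler0 subrr.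
have yu : y u 0 = 0 by rewrite !mxE mulrC subrr.
have detP : \det (principal_mx [set~ u] X) != 0 by rewrite -adj_diag.
have /(congr1 (fun z : 'cV_n => z i 0)) := ker_vanishing_eq0 detP Xy yu.
rewrite !mxE => /eqP; rewrite subr_eq0 => /eqP.
by rewrite mulrC => ->; rewrite mulrC.
Qed.

End SingularKernel.

Lemma sym_mxE (T : Type) n (A : 'M[T]_n) : A^T = A -> forall i j, A i j = A j i.
Proof. by move=> AT i j; rewrite -[in LHS]AT mxE. Qed.

Section ForestPaths.
Variables (R : realType) (n : nat) (A : 'M[R]_n).
Hypothesis A_sym : A^T = A.
Hypothesis A_acyclic : acyclic A.
Local Notation e := (adjA A).

Lemma adjA_sym : symmetric e.
Proof. by move=> x y; rewrite /adjA eq_sym sym_mxE. Qed.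

Lemma is_pathA_cons u v w s :
  is_pathA A u v (w :: s) = [&& e u w, u \notin w :: s & is_pathA A w v s].
Proof.
rewrite /is_pathA /=.
by case: (e u w); case: (u \in _); case: (path _ _ _); case: (_ == v).
Qed.

Lemma is_pathA_prepend u v i t : A i u != 0 -> u \notin i :: t ->
  is_pathA A i v t -> is_pathA A u v (i :: t).
Proof.
move=> Aiu uit it; rewrite is_pathA_cons uit it /adjA (sym_mxE A_sym) Aiu !andbT.
by apply: contraNneq uit => ->; exact: mem_head.
Qed.

Lemma path_rev_adjA x b c : path e x (rcons b c) -> path e c (rcons (rev b) x).
Proof.
have := rev_path e x (rcons b c); rewrite last_rcons belast_rcons rev_cons => ->.
by rewrite (eq_path (e' := e)) // => y z; rewrite adjA_sym.
Qed.

Lemma cycle_of_two_paths x a b c :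
  path e x (rcons a c) -> path e x (rcons b c) ->
  uniq (x :: rcons a c) -> uniq (x :: rcons b c) -> ~~ has (mem b) a ->
  a ++ b != [::] -> is_cycleA A (x :: a ++ c :: rev b).
Proof.
move=> pa pb ua ub ab nab; apply/and3P; split.
- by rewrite /= size_cat /= size_rev addnS !ltnS -size_cat lt0n size_eq0.
- rewrite -cat_rcons -cat_cons cat_uniq ua rev_uniq has_rev.
  move: ub; rewrite /= mem_rcons rcons_uniq !inE !negb_or.
  move=> /and3P[/andP[xc xb] cb ->].
  rewrite andbT; apply/hasPn => y yb; rewrite !inE mem_rcons !inE !negb_or.
  apply/and3P; split; first by apply: contraNneq xb => <-.
    by apply: contraNneq cb => <-.
  by apply: contra ab => ya; apply/hasP; exists y.
rewrite /= rcons_cat /= -cat_rcons cat_path last_rcons pa.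
exact: path_rev_adjA.
Qed.

(* Cutting both paths at the first vertex [c] of the first one that lies on the
   second closes the cycle [u :: a ++ c :: rev b]. *)
Lemma forest_path_head u v w1 w2 s1 s2 :
  is_pathA A u v (w1 :: s1) -> is_pathA A u v (w2 :: s2) -> w1 = w2.
Proof.
move=> /and3P[pP /eqP lP uP] /and3P[pQ /eqP lQ uQ]; apply/eqP/contraT => w12.
have vP : v \in w1 :: s1 by rewrite -lP /= mem_last.
have vQ : v \in w2 :: s2 by rewrite -lQ /= mem_last.
have hd : head u (w1 :: s1) != head u (w2 :: s2) by [].
move: (w1 :: s1) (w2 :: s2) pP uP pQ uQ vP vQ hd => P Q pP uP pQ uQ vP vQ hd.
have hasQ : has (mem Q) P by apply/hasP; exists v.
case/split_find: hasQ pP uP hd => c a rest cQ aQ pP uP hd.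
case/splitPr: cQ pQ uQ hd aQ => b rest2 pQ uQ hd aQ.
case/negP: (A_acyclic (u :: a ++ c :: rev b)); apply: cycle_of_two_paths.
- by move: pP; rewrite cat_path => /andP[].
- by move: pQ; rewrite -cat_rcons cat_path => /andP[].
- by move: uP; rewrite -cat_cons cat_uniq => /andP[].
- by move: uQ; rewrite -cat_rcons -cat_cons cat_uniq => /andP[].
- by apply: contra aQ; apply: sub_has => y /= yb; rewrite mem_cat yb.
by case: a hd {pP uP aQ} => [|? ?]; case: b {pQ uQ} => [|? ?] //=; rewrite eqxx.
Qed.

End ForestPaths.

Section ForestAdjugate.
Variables (R : realType) (n : nat) (A : 'M[R]_n) (lam : R).
Hypothesis A_sym : A^T = A.
Hypothesis A_acyclic : acyclic A.
Local Notation M := (lam%:M - A).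
Implicit Types (S : {set 'I_n}) (u v : 'I_n) (s : seq 'I_n).

Lemma notin_all_setD1 S u s : all (mem (S :\ u)) s -> u \notin s.
Proof. by move=> sS; apply/negP => /(allP sS); rewrite /= in_setD1 eqxx. Qed.

Lemma adj_principal_step S u v : u \in S -> v != u ->
  \adj (principal_mx S M) v u =
  \sum_(i in S :\ u) A i u * \adj (principal_mx (S :\ u) M) v i.
Proof.
move=> uS vu; rewrite adj_principal_offdiag // -sumrN; apply: eq_bigr => i.
by rewrite in_setD1 => /andP[iu _]; rewrite !mxE (negPf iu) sub0r mulNr opprK.
Qed.

Lemma adj_principal_nopath S u v : u \in S -> v \in S ->
  (forall s, is_pathA A u v s -> ~~ all (mem S) (u :: s)) ->
  \adj (principal_mx S M) v u = 0.
Proof.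
elim: {S}_.+1 {-2}S (ltnSn #|S|) u v => // k IH S leSk u v uS vS noP.
have [vu|vu] := eqVneq v u.
  by have := noP [::]; rewrite /is_pathA /= vu eqxx uS => /(_ isT).
rewrite adj_principal_step //; apply: big1 => i; rewrite in_setD1 => /andP[iu iS].
have [->|Aiu] := eqVneq (A i u) 0; first by rewrite mul0r.
rewrite (IH (S :\ u)) ?mulr0 ?in_setD1 ?iu ?vu //.
  by rewrite -ltnS (leq_trans _ leSk) // (cardsD1 u S) uS.
move=> t it; apply/negP => itS.
have uit := is_pathA_prepend A_sym Aiu (notin_all_setD1 itS) it.
case/negP: (noP _ uit); rewrite [all _ (u :: _)]/= uS /=.
by apply: sub_all itS => y /=; rewrite in_setD1 => /andP[].
Qed.

Lemma adj_principal_path S u v s : is_pathA A u v s -> all (mem S) (u :: s) ->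
  \adj (principal_mx S M) v u =
  pathW A u s * \det (principal_mx (S :\: [set x in u :: s]) M).
Proof.
elim: s S u => [|w s IH] S u uvP allS.
  move: uvP => /and3P[_ /= /eqP <- _]; rewrite adj_diag principal_mx_comp.
  rewrite /pathW big_nil mul1r; congr (\det (principal_mx _ _)).
  by apply/setP => x; rewrite !inE andbC.
move: (uvP); rewrite is_pathA_cons => /and3P[_ uws ws].
have uS : u \in S := allP allS u (mem_head _ _).
have vws : v \in w :: s by case/and3P: ws => _ /eqP <- _; exact: mem_last.
have vu : v != u by apply: contraNneq uws => <-.
have wsSu : all (mem (S :\ u)) (w :: s).
  apply/allP => y yws; rewrite /= in_setD1; apply/andP; split.
    by apply: contraNneq uws => <-.
  by apply: (allP allS); rewrite inE yws orbT.
have wSu : w \in S :\ u := allP wsSu w (mem_head _ _).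
have vSu : v \in S :\ u := allP wsSu v vws.
rewrite adj_principal_step // (bigD1 w) //= IH // big1 ?addr0.
  rewrite /pathW /= big_cons /= mulrA (sym_mxE A_sym).
  congr (_ * \det (principal_mx _ _)).
  by apply/setP => x; rewrite !inE; case: (x == u); case: (x == w); case: (x \in s).
move=> i /andP[iSu iw]; have [->|Aiu] := eqVneq (A i u) 0; first by rewrite mul0r.
rewrite adj_principal_nopath ?mulr0 // => t it.
apply: contra iw => itS; apply/eqP.
have uit := is_pathA_prepend A_sym Aiu (notin_all_setD1 itS) it.
exact: (forest_path_head A_sym A_acyclic uit uvP).
Qed.

Lemma adj_pathE u v s : is_pathA A u v s ->
  \adj M v u = pathW A u s * phi (delmx A [set x in u :: s]) lam.
Proof.
move=> uvs; rewrite -[M]principal_mxT (adj_principal_path uvs) ?setTD ?phi_delmx //.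
by apply/allP => x _; rewrite /= in_setT.
Qed.

Lemma adj_nopathE u v : (forall s, ~~ is_pathA A u v s) -> \adj M v u = 0.
Proof.
move=> noP; rewrite -[M]principal_mxT adj_principal_nopath ?in_setT // => s uvs.
by rewrite (negPf (noP s)) in uvs.
Qed.

End ForestAdjugate.

Lemma eigvecZ (R : realType) n (A : 'M[R]_n) lam x k :
  k != 0 -> eigvec A lam x -> eigvec A lam (k *: x).
Proof.
move=> k0 [x0 Ax]; split; first by rewrite scaler_eq0 negb_or k0.
by rewrite -scalemxAr Ax !scalerA mulrC.
Qed.

Section AdjugateEigenvector.
Variables (R : realType) (n : nat) (A : 'M[R]_n) (lam : R) (u : 'I_n).
Hypothesis A_sym : A^T = A.
Hypothesis lam_root : phi A lam = 0.
Hypothesis phi_u : phi (delmx A [set u]) lam != 0.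
Local Notation N := (\adj (lam%:M - A)).

Lemma adj_diagE v : N v v = phi (delmx A [set v]) lam.
Proof. by rewrite adj_diag phi_delmx. Qed.

Lemma adj_col_eigvec : eigvec A lam (col u N).
Proof.
split.
  have Nuu : N u u != 0 by rewrite adj_diagE.
  by apply: contra_neq Nuu => /(congr1 (fun y : 'cV_n => y u 0)); rewrite !mxE.
have : (lam%:M - A) *m N = 0 by rewrite mul_mx_adj -phi_det lam_root raddf0.
rewrite mulmxBl mul_scalar_mx => /eqP; rewrite subr_eq0 => /eqP AN.
by rewrite colE mulmxA -AN -scalemxAl.
Qed.

Lemma adj_col_sqr v :
  N v u ^+ 2 = phi (delmx A [set v]) lam * phi (delmx A [set u]) lam.
Proof.
have N_sym : (\adj (lam%:M - A))^T = \adj (lam%:M - A).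
  by rewrite trmx_adj linearB /= tr_scalar_mx A_sym.
rewrite -!adj_diagE adj_col_proportional ?adj_diagE -?phi_det //.
by rewrite (sym_mxE N_sym u v) expr2.
Qed.

Lemma adj_col_sqr_sum :
  \sum_i N i u ^+ 2 = phi (delmx A [set u]) lam * dphi A lam.
Proof.
rewrite dphi_tr_adj mulr_sumr; apply: eq_bigr => i _.
by rewrite adj_col_sqr adj_diagE mulrC.
Qed.

Lemma phi_dphi_gt0 : 0 < phi (delmx A [set u]) lam * dphi A lam.
Proof.
rewrite -adj_col_sqr_sum (bigD1 u) //= ltr_wpDr //.
  by apply: sumr_ge0 => i _; rewrite sqr_ge0.
by rewrite lt_def sqr_ge0 andbT sqrf_eq0 adj_diagE.
Qed.

End AdjugateEigenvector.

Lemma unit_vec_normalize (R : realType) n (x : 'cV[R]_n) a :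
  \sum_i x i 0 ^+ 2 = a -> 0 < a -> unit_vec ((Num.sqrt a)^-1 *: x).
Proof.
move=> xa a_gt0; rewrite /unit_vec.
under eq_bigr do rewrite mxE exprMn exprVn sqr_sqrtr ?(ltW a_gt0) //.
by rewrite -mulr_sumr xa mulVf ?gt_eqF.
Qed.

Lemma norm_div_sqrt (R : realType) (b c p : R) : b ^+ 2 = c * p -> p != 0 ->
  `|(Num.sqrt `|p|)^-1 * b| = Num.sqrt `|c|.
Proof.
move=> bcp p0; have sqrt_b : `|b| = Num.sqrt `|c| * Num.sqrt `|p|.
  by rewrite -sqrtrM // -normrM -bcp ger0_norm ?sqr_ge0 // sqrtr_sqr.
rewrite normrM ger0_norm ?invr_ge0 ?sqrtr_ge0 // sqrt_b mulrC mulfK //.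
by rewrite sqrtr_eq0 -ltNge normr_gt0.
Qed.

Theorem theorem3p3 (R : realType) (n : nat) (A : 'M[R]_n) (lam : R) (u : 'I_n) :
  A^T = A ->
  acyclic A ->
  mup lam (char_poly A) = 1%N ->
  phi (delmx A [set u]) lam != 0 ->
  exists beta gamma : 'cV[R]_n,
    [/\ eigvec A lam beta, unit_vec beta, eigvec A lam gamma &
      forall v : 'I_n,
        [/\ forall s : seq 'I_n, is_pathA A u v s ->
              beta v 0 = pathW A u s * phi (delmx A [set x in u :: s]) lam
                         / Num.sqrt (phi (delmx A [set u]) lam * dphi A lam),
            (forall s : seq 'I_n, ~~ is_pathA A u v s) -> beta v 0 = 0 &
            `|gamma v 0| = Num.sqrt `|phi (delmx A [set v]) lam| ]].
Proof.
move=> A_sym A_acyclic mup1 phi_u.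
have lam_root : phi A lam = 0.
  by apply/eqP; apply: contraT => /mupNroot; rewrite mup1.
have pd_gt0 := phi_dphi_gt0 A_sym lam_root phi_u.
have sqrt_neq0 (a : R) : 0 < a -> (Num.sqrt a)^-1 != 0.
  by rewrite invr_eq0 sqrtr_eq0 -ltNge.
set N := \adj (lam%:M - A).
exists ((Num.sqrt (phi (delmx A [set u]) lam * dphi A lam))^-1 *: col u N).
exists ((Num.sqrt `|phi (delmx A [set u]) lam|)^-1 *: col u N).
have eigN := adj_col_eigvec lam_root phi_u.
split; [exact: eigvecZ (sqrt_neq0 _ pd_gt0) eigN | | |].
- apply: unit_vec_normalize pd_gt0; rewrite -(adj_col_sqr_sum A_sym lam_root phi_u).
  by apply: eq_bigr => i _; rewrite mxE.
- by apply: eigvecZ eigN; rewrite sqrt_neq0 ?normr_gt0.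
move=> v; split; rewrite 2!mxE.
- by move=> s /(adj_pathE lam A_sym A_acyclic) ->; rewrite mulrC.
- by move=> /(adj_nopathE lam A_sym) ->; rewrite mulr0.
exact: (norm_div_sqrt (adj_col_sqr A_sym lam_root phi_u v) phi_u).
Qed.
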